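(* Let $A$ be a locally-complex Cayley--Dickson algebra and $f(x)\in A[x]$ a polynomial of degree $n$. Then the set of spherical roots of $f(x)$ is a union of at most $\lfloor n/2\rfloor$ quadratic-equivalence classes.
   Context: Real Cayley--Dickson algebras: $A_0=\mathbb{R}$ with identity involution, $A_{k+1}=A_k\{\gamma_k\}=A_k\times A_k$ with product $(a,b)(c,d)=(ac+\gamma_k\bar d b,\ da+b\bar c)$ and involution $\overline{(a,b)}=(\bar a,-b)$. A real unital algebra is locally-complex if every non-real element generates a subalgebra isomorphic to $\mathbb{C}$ (for Cayley--Dickson algebras: all $\gamma_k=-1$ up to isomorphism). Trace $\mathrm{tr}(\lambda)=\lambda+\bar\lambda\in\mathbb{R}$, norm $\mathrm{n}(\lambda)=\bar\lambda\lambda\in\mathbb{R}$, characteristic polynomial $p_\lambda(x)=x^2-\mathrm{tr}(\lambda)x+\mathrm{n}(\lambda)$. $A[x]=A\otimes_{\mathbb{R}}\mathbb{R}[x]$ with central $x$; $f(x)=a_mx^m+\dots+a_0$, $a_k\in A$; substitution $f(r)=\sum_k a_k(r^k)$. A root $\lambda\in A\setminus\mathbb{R}$ of $f$ is spherical if every $r\in A$ with $p_\lambda(r)=0$ is a root of $f$. Elements $r,\lambda$ are quadratically-equivalent if $\mathrm{tr}(r)=\mathrm{tr}(\lambda)$ and $\mathrm{n}(r)=\mathrm{n}(\lambda)$. *)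

From Stdlib Require Import Reals List Arith.
Open Scope R_scope.

(* Real Cayley--Dickson algebra A_k with all gamma_j = -1
   (the locally-complex ones, up to isomorphism).
   A_0 = R, A_{k+1} = A_k x A_k. *)
Fixpoint CD (k : nat) : Type :=
  match k with
  | O => R
  | S k' => (CD k' * CD k')%type
  end.

Fixpoint cd_zero (k : nat) : CD k :=
  match k return CD k with
  | O => 0
  | S k' => (cd_zero k', cd_zero k')
  end.

Fixpoint cd_real (k : nat) (r : R) : CD k :=
  match k return CD k with
  | O => r
  | S k' => (cd_real k' r, cd_zero k')
  end.

Definition cd_one (k : nat) : CD k := cd_real k 1.

Fixpoint cd_add (k : nat) : CD k -> CD k -> CD k :=
  match k return CD k -> CD k -> CD k with
  | O => Rplus
  | S k' => fun x y => (cd_add k' (fst x) (fst y), cd_add k' (snd x) (snd y))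
  end.

Fixpoint cd_opp (k : nat) : CD k -> CD k :=
  match k return CD k -> CD k with
  | O => Ropp
  | S k' => fun x => (cd_opp k' (fst x), cd_opp k' (snd x))
  end.

Definition cd_sub (k : nat) (x y : CD k) : CD k := cd_add k x (cd_opp k y).

Fixpoint cd_conj (k : nat) : CD k -> CD k :=
  match k return CD k -> CD k with
  | O => fun x => x
  | S k' => fun x => (cd_conj k' (fst x), cd_opp k' (snd x))
  end.

(* product (a,b)(c,d) = (ac + gamma * conj(d) b, d a + b conj(c)), gamma = -1 *)
Fixpoint cd_mul (k : nat) : CD k -> CD k -> CD k :=
  match k return CD k -> CD k -> CD k with
  | O => Rmult
  | S k' => fun x y =>
      let a := fst x in let b := snd x in
      let c := fst y in let d := snd y in
      (cd_sub k' (cd_mul k' a c) (cd_mul k' (cd_conj k' d) b),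
       cd_add k' (cd_mul k' d a) (cd_mul k' b (cd_conj k' c)))
  end.

(* powers r^m (Cayley--Dickson algebras are power-associative) *)
Fixpoint cd_pow (k : nat) (r : CD k) (m : nat) : CD k :=
  match m with
  | O => cd_one k
  | S m' => cd_mul k r (cd_pow k r m')
  end.

Definition cd_is_real (k : nat) (x : CD k) : Prop := exists r : R, x = cd_real k r.

Definition cd_tr (k : nat) (l : CD k) : CD k := cd_add k l (cd_conj k l).
Definition cd_norm (k : nat) (l : CD k) : CD k := cd_mul k (cd_conj k l) l.

Definition char_eval (k : nat) (l r : CD k) : CD k :=
  cd_add k (cd_sub k (cd_mul k r r) (cd_mul k (cd_tr k l) r)) (cd_norm k l).

(* polynomials in A[x] with central x: coefficient lists [a_0; a_1; ...; a_m].
   Substitution f(r) = sum_j a_j (r^j). *)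
Fixpoint poly_eval_from (k : nat) (f : list (CD k)) (j : nat) (r : CD k) : CD k :=
  match f with
  | nil => cd_zero k
  | a :: f' => cd_add k (cd_mul k a (cd_pow k r j)) (poly_eval_from k f' (S j) r)
  end.

Definition poly_eval (k : nat) (f : list (CD k)) (r : CD k) : CD k :=
  poly_eval_from k f 0 r.

Definition has_degree (k : nat) (f : list (CD k)) (n : nat) : Prop :=
  length f = S n /\ last f (cd_zero k) <> cd_zero k.

Definition spherical_root (k : nat) (f : list (CD k)) (l : CD k) : Prop :=
  ~ cd_is_real k l /\ poly_eval k f l = cd_zero k /\
  forall r : CD k, char_eval k l r = cd_zero k -> poly_eval k f r = cd_zero k.

Definition quad_equiv (k : nat) (r l : CD k) : Prop :=
  cd_tr k r = cd_tr k l /\ cd_norm k r = cd_norm k l.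

(* If r^2 = t r - m with t, m real, every power r^j reduces to a_j r + b_j with real a_j, b_j,
   so f(r) = A r + B where A, B depend only on (t, m) and the coefficients of f.  A
   spherical root l (t = tr(l), m = n(l)) makes f vanish at Re l ± rho i, where
   rho^2 = n(l) - Re(l)^2 > 0, and these two equations force A = B = 0.  In a coordinate
   where the leading coefficient of f is nonzero, A = B = 0 says that X^2 - t X + m
   divides a real polynomial of degree n, i.e. that Re l ± i rho are two of its complex
   roots.  Distinct classes give distinct conjugate pairs, so there are at most n/2 of
   them. *)

From Stdlib Require Import Reals List Arith.
From Stdlib Require Import Lra Lia Classical.
From mathcomp Require ssreflect ssrfun ssrbool eqtype ssrnat seq ssralg poly.
From mathcomp Require complex Rstruct.
From mathcomp.algebra_tactics Require ring.
Open Scope R_scope.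

Fixpoint cd_scal (k : nat) (c : R) : CD k -> CD k :=
  match k return CD k -> CD k with
  | O => fun x => c * x
  | S k' => fun x => (cd_scal k' c (fst x), cd_scal k' c (snd x))
  end.

Fixpoint cd_coord (k : nat) : CD k -> nat -> R :=
  match k return CD k -> nat -> R with
  | O => fun x i => match i with O => x | S _ => 0 end
  | S k' => fun x i => if Nat.even i then cd_coord k' (fst x) (Nat.div2 i)
                       else cd_coord k' (snd x) (Nat.div2 i)
  end.

Lemma cd_ext k (x y : CD k) : (forall i, cd_coord k x i = cd_coord k y i) -> x = y.
Proof.
  induction k as [|k IHk]; simpl; intros H.
  - exact (H 0%nat).
  - destruct x as [a b], y as [c d]; simpl in H. f_equal; apply IHk; intros i.
    + specialize (H (2 * i)%nat). rewrite Nat.even_mul, Nat.div2_double in H. exact H.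
    + specialize (H (S (2 * i))).
      rewrite Nat.even_succ, Nat.odd_mul, Nat.div2_succ_double in H. exact H.
Qed.

Lemma cd_coord_add k x y i : cd_coord k (cd_add k x y) i = cd_coord k x i + cd_coord k y i.
Proof.
  revert i; induction k; simpl; intros i.
  - destruct i; [reflexivity | ring].
  - destruct (Nat.even i); auto.
Qed.

Lemma cd_coord_opp k x i : cd_coord k (cd_opp k x) i = - cd_coord k x i.
Proof.
  revert i; induction k; simpl; intros i.
  - destruct i; [reflexivity | ring].
  - destruct (Nat.even i); auto.
Qed.

Lemma cd_coord_scal k c x i : cd_coord k (cd_scal k c x) i = c * cd_coord k x i.
Proof.
  revert i; induction k; simpl; intros i.
  - destruct i; [reflexivity | ring].
  - destruct (Nat.even i); auto.
Qed.

Lemma cd_coord_zero k i : cd_coord k (cd_zero k) i = 0.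
Proof.
  revert i; induction k; simpl; intros i.
  - destruct i; reflexivity.
  - destruct (Nat.even i); auto.
Qed.

Lemma cd_neq0_coord k (x : CD k) : x <> cd_zero k -> exists i, cd_coord k x i <> 0.
Proof.
  intros Hx. apply NNPP. intros Hno. apply Hx, cd_ext. intros i.
  rewrite cd_coord_zero. apply NNPP. intros Hi. apply Hno. exists i. exact Hi.
Qed.

Ltac cd_linear :=
  unfold cd_sub; apply cd_ext; intro;
  repeat rewrite ?cd_coord_add, ?cd_coord_opp, ?cd_coord_scal, ?cd_coord_zero; ring.

Lemma cd_real_scal k c : cd_real k c = cd_scal k c (cd_one k).
Proof.
  unfold cd_one. induction k; simpl.
  - ring.
  - rewrite IHk. f_equal. cd_linear.
Qed.

Lemma cd_add0l k x : cd_add k (cd_zero k) x = x.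
Proof. cd_linear. Qed.

Lemma cd_subr0 k x : cd_sub k x (cd_zero k) = x.
Proof. cd_linear. Qed.

Lemma cd_opp_scal k x : cd_opp k x = cd_scal k (-1) x.
Proof. cd_linear. Qed.

Lemma cd_zero_scal k x : cd_zero k = cd_scal k 0 x.
Proof. cd_linear. Qed.

Lemma cd_conjD k x y : cd_conj k (cd_add k x y) = cd_add k (cd_conj k x) (cd_conj k y).
Proof. induction k; simpl; auto. f_equal; auto. cd_linear. Qed.

Lemma cd_conjZ k c x : cd_conj k (cd_scal k c x) = cd_scal k c (cd_conj k x).
Proof. induction k; simpl; auto. f_equal; auto. cd_linear. Qed.

Lemma cd_conj_zero k : cd_conj k (cd_zero k) = cd_zero k.
Proof. induction k; simpl; auto. f_equal; auto. cd_linear. Qed.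

Lemma cd_conj_real k c : cd_conj k (cd_real k c) = cd_real k c.
Proof. induction k; simpl; auto. f_equal; auto. cd_linear. Qed.

Lemma cd_mulD k x y z :
  cd_mul k (cd_add k x y) z = cd_add k (cd_mul k x z) (cd_mul k y z) /\
  cd_mul k z (cd_add k x y) = cd_add k (cd_mul k z x) (cd_mul k z y).
Proof.
  revert x y z; induction k as [|k IHk]; simpl; intros x y z.
  - split; ring.
  - split; f_equal; rewrite ?cd_conjD, ?(proj1 (IHk _ _ _)), ?(proj2 (IHk _ _ _)); cd_linear.
Qed.

Lemma cd_mulDl k x y z : cd_mul k (cd_add k x y) z = cd_add k (cd_mul k x z) (cd_mul k y z).
Proof. apply cd_mulD. Qed.

Lemma cd_mulDr k x y z : cd_mul k z (cd_add k x y) = cd_add k (cd_mul k z x) (cd_mul k z y).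
Proof. apply cd_mulD. Qed.

Lemma cd_mulZ k c x y :
  cd_mul k (cd_scal k c x) y = cd_scal k c (cd_mul k x y) /\
  cd_mul k x (cd_scal k c y) = cd_scal k c (cd_mul k x y).
Proof.
  revert c x y; induction k as [|k IHk]; simpl; intros c x y.
  - split; ring.
  - split; f_equal; rewrite ?cd_conjZ, ?(proj1 (IHk _ _ _)), ?(proj2 (IHk _ _ _)); cd_linear.
Qed.

Lemma cd_mulZl k c x y : cd_mul k (cd_scal k c x) y = cd_scal k c (cd_mul k x y).
Proof. apply cd_mulZ. Qed.

Lemma cd_mulZr k c x y : cd_mul k x (cd_scal k c y) = cd_scal k c (cd_mul k x y).
Proof. apply cd_mulZ. Qed.

Lemma cd_mul0l k x : cd_mul k (cd_zero k) x = cd_zero k.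
Proof. rewrite (cd_zero_scal k (cd_zero k)), cd_mulZl. cd_linear. Qed.

Lemma cd_mul0r k x : cd_mul k x (cd_zero k) = cd_zero k.
Proof. rewrite (cd_zero_scal k (cd_zero k)), cd_mulZr. cd_linear. Qed.

Lemma cd_mulNl k x y : cd_mul k (cd_opp k x) y = cd_opp k (cd_mul k x y).
Proof. rewrite !cd_opp_scal, cd_mulZl. reflexivity. Qed.

Lemma cd_mulNr k x y : cd_mul k x (cd_opp k y) = cd_opp k (cd_mul k x y).
Proof. rewrite !cd_opp_scal, cd_mulZr. reflexivity. Qed.

Lemma cd_mul_real k c x :
  cd_mul k (cd_real k c) x = cd_scal k c x /\ cd_mul k x (cd_real k c) = cd_scal k c x.
Proof.
  revert x; induction k as [|k IHk]; simpl; intros x.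
  - split; ring.
  - destruct x as [a b]; simpl.
    rewrite !cd_conj_real, cd_conj_zero, !cd_mul0l, !cd_mul0r,
      !(proj1 (IHk _)), !(proj2 (IHk _)).
    split; f_equal; cd_linear.
Qed.

Lemma cd_mul_real_l k c x : cd_mul k (cd_real k c) x = cd_scal k c x.
Proof. apply cd_mul_real. Qed.

Lemma cd_mul_real_r k c x : cd_mul k x (cd_real k c) = cd_scal k c x.
Proof. apply cd_mul_real. Qed.

(* Real-valued counterparts of half the trace and of the norm, see [cd_trE] and [cd_normE]. *)
Fixpoint cd_re (k : nat) : CD k -> R :=
  match k return CD k -> R with
  | O => fun x => x
  | S k' => fun x => cd_re k' (fst x)
  end.

Fixpoint cd_nrm (k : nat) : CD k -> R :=
  match k return CD k -> R with
  | O => fun x => x * x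
  | S k' => fun x => cd_nrm k' (fst x) + cd_nrm k' (snd x)
  end.

Lemma cd_reD k x y : cd_re k (cd_add k x y) = cd_re k x + cd_re k y.
Proof. induction k; simpl; auto. Qed.

Lemma cd_reZ k c x : cd_re k (cd_scal k c x) = c * cd_re k x.
Proof. induction k; simpl; auto. Qed.

Lemma cd_re_real k c : cd_re k (cd_real k c) = c.
Proof. induction k; simpl; auto. Qed.

Lemma cd_nrm_zero k : cd_nrm k (cd_zero k) = 0.
Proof. induction k; simpl; [ring | rewrite IHk; ring]. Qed.

Lemma cd_nrm_real k c : cd_nrm k (cd_real k c) = c * c.
Proof. induction k; simpl; [reflexivity | rewrite IHk, cd_nrm_zero; ring]. Qed.

Lemma cd_nrmZ k c x : cd_nrm k (cd_scal k c x) = c * c * cd_nrm k x.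
Proof. induction k; simpl; [ring | rewrite !IHk; ring]. Qed.

Lemma cd_nrm_add_real k c x :
  cd_nrm k (cd_add k (cd_real k c) x) = c * c + 2 * c * cd_re k x + cd_nrm k x.
Proof.
  induction k; simpl; [ring|].
  rewrite IHk, cd_add0l. ring.
Qed.

Lemma cd_nrm_ge0 k x : 0 <= cd_nrm k x.
Proof.
  induction k; simpl; [nra|].
  pose proof (IHk (fst x)); pose proof (IHk (snd x)). lra.
Qed.

Lemma cd_nrm_eq0 k x : cd_nrm k x = 0 -> x = cd_zero k.
Proof.
  induction k; simpl; intros H; [nra|].
  destruct x as [a b]; simpl in *.
  pose proof (cd_nrm_ge0 k a); pose proof (cd_nrm_ge0 k b).
  f_equal; apply IHk; lra.
Qed.

Lemma cd_re_sqr_le_nrm k x : cd_re k x * cd_re k x <= cd_nrm k x.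
Proof.
  induction k; simpl; [lra|].
  pose proof (cd_nrm_ge0 k (snd x)); pose proof (IHk (fst x)). lra.
Qed.

Lemma cd_is_real_nrm k x : cd_is_real k x <-> cd_nrm k x = cd_re k x * cd_re k x.
Proof.
  unfold cd_is_real. split.
  - intros [r ->]. rewrite cd_nrm_real, cd_re_real. reflexivity.
  - intros H. exists (cd_re k x). induction k; simpl in *; [reflexivity|].
    destruct x as [a b]; simpl in *.
    pose proof (cd_nrm_ge0 k b); pose proof (cd_re_sqr_le_nrm k a).
    f_equal; [apply IHk | apply cd_nrm_eq0]; lra.
Qed.

Lemma cd_not_real_nrm k x : ~ cd_is_real k x -> cd_re k x * cd_re k x < cd_nrm k x.
Proof.
  intros Hx. destruct (Rle_lt_or_eq_dec _ _ (cd_re_sqr_le_nrm k x)) as [Hlt | Heq].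
  - exact Hlt.
  - exfalso. apply Hx, cd_is_real_nrm. symmetry. exact Heq.
Qed.

Lemma cd_trE k l : cd_tr k l = cd_real k (2 * cd_re k l).
Proof.
  unfold cd_tr. induction k; simpl; [ring|].
  destruct l as [a b]; simpl. rewrite IHk. f_equal. cd_linear.
Qed.

Lemma cd_normE k l : cd_norm k l = cd_real k (cd_nrm k l).
Proof.
  unfold cd_norm. induction k; simpl; [ring|].
  destruct l as [a b]; simpl. rewrite IHk, cd_mulNr, IHk, cd_mulNl. f_equal.
  - rewrite !cd_real_scal. cd_linear.
  - cd_linear.
Qed.

Lemma quad_equivP k l c :
  quad_equiv k l c <-> cd_re k l = cd_re k c /\ cd_nrm k l = cd_nrm k c.
Proof.
  unfold quad_equiv. rewrite !cd_trE, !cd_normE. split.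
  - intros [Ht Hn]. apply (f_equal (cd_re k)) in Ht, Hn. rewrite !cd_re_real in Ht, Hn.
    split; lra.
  - intros [-> ->]. split; reflexivity.
Qed.

Lemma char_eval_self k l : char_eval k l l = cd_zero k.
Proof. unfold char_eval, cd_tr, cd_norm. rewrite cd_mulDl. cd_linear. Qed.

Lemma char_eval_equiv k l c r : quad_equiv k l c -> char_eval k l r = char_eval k c r.
Proof. intros [Ht Hn]. unfold char_eval. rewrite Ht, Hn. reflexivity. Qed.

Lemma cd_sqrE k r :
  cd_mul k r r = cd_add k (cd_scal k (2 * cd_re k r) r) (cd_real k (- cd_nrm k r)).
Proof.
  transitivity (cd_sub k (cd_mul k (cd_tr k r) r) (cd_norm k r)).
  - unfold cd_tr, cd_norm. rewrite cd_mulDl. cd_linear.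
  - rewrite cd_trE, cd_normE, cd_mul_real_l, !cd_real_scal. cd_linear.
Qed.

(* [xpow_rem t m j] = (α, β) with X^j ≡ α X + β modulo X^2 - t X + m. *)
Fixpoint xpow_rem (t m : R) (j : nat) : R * R :=
  match j with
  | O => (0, 1)
  | S j' => let p := xpow_rem t m j' in (t * fst p + snd p, - m * fst p)
  end.

(* [rem_coef1 k t m s f] and [rem_coef0 k t m s f] are the coefficients of X and 1
   in X^s f(X) modulo X^2 - t X + m, with the coefficients of f kept on the left. *)
Fixpoint rem_coef1 k (t m : R) (s : nat) (f : list (CD k)) : CD k :=
  match f with
  | nil => cd_zero k
  | a :: f' => cd_add k (cd_scal k (fst (xpow_rem t m s)) a) (rem_coef1 k t m (S s) f')
  end.

Fixpoint rem_coef0 k (t m : R) (s : nat) (f : list (CD k)) : CD k :=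
  match f with
  | nil => cd_zero k
  | a :: f' => cd_add k (cd_scal k (snd (xpow_rem t m s)) a) (rem_coef0 k t m (S s) f')
  end.

Section QuadraticElement.

Variables (k : nat) (t m : R) (r : CD k).
Hypothesis r_quad : cd_mul k r r = cd_add k (cd_scal k t r) (cd_real k (- m)).

Lemma cd_pow_quad j :
  cd_pow k r j = cd_add k (cd_scal k (fst (xpow_rem t m j)) r) (cd_real k (snd (xpow_rem t m j))).
Proof.
  induction j as [|j IHj]; simpl.
  - unfold cd_one. rewrite !cd_real_scal. cd_linear.
  - rewrite IHj, cd_mulDr, cd_mulZr, cd_mul_real_r, r_quad, !cd_real_scal. cd_linear.
Qed.

Lemma poly_eval_from_quad f s :
  poly_eval_from k f s r = cd_add k (cd_mul k (rem_coef1 k t m s f) r) (rem_coef0 k t m s f).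
Proof.
  revert s; induction f as [|a f IHf]; intros s; simpl.
  - rewrite cd_mul0l. cd_linear.
  - rewrite IHf, cd_pow_quad, cd_mulDr, cd_mulZr, cd_mul_real_r, cd_mulDl, cd_mulZl.
    cd_linear.
Qed.

End QuadraticElement.

Lemma cd_coord_rem_coef1 k t m s f i :
  cd_coord k (rem_coef1 k t m s f) i = rem_coef1 0 t m s (map (fun a => cd_coord k a i) f).
Proof.
  revert s; induction f as [|a f IHf]; intros s; simpl.
  - apply cd_coord_zero.
  - rewrite cd_coord_add, cd_coord_scal, IHf. reflexivity.
Qed.

Lemma cd_coord_rem_coef0 k t m s f i :
  cd_coord k (rem_coef0 k t m s f) i = rem_coef0 0 t m s (map (fun a => cd_coord k a i) f).
Proof.
  revert s; induction f as [|a f IHf]; intros s; simpl.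
  - apply cd_coord_zero.
  - rewrite cd_coord_add, cd_coord_scal, IHf. reflexivity.
Qed.

Fixpoint cd_imag (k : nat) : CD (S k) :=
  match k return CD (S k) with
  | O => (0, 1)
  | S k' => (cd_imag k', cd_zero (S k'))
  end.

Lemma cd_re_imag k : cd_re (S k) (cd_imag k) = 0.
Proof. induction k; simpl in *; auto. Qed.

Lemma cd_nrm_imag k : cd_nrm (S k) (cd_imag k) = 1.
Proof.
  induction k; [simpl; ring|].
  change (cd_nrm (S k) (cd_imag k) + cd_nrm (S k) (cd_zero (S k)) = 1).
  rewrite IHk, cd_nrm_zero. ring.
Qed.

Lemma cd_conj_imag k : cd_conj (S k) (cd_imag k) = cd_opp (S k) (cd_imag k).
Proof.
  induction k; [simpl; f_equal; ring|].
  change ((cd_conj (S k) (cd_imag k), cd_opp (S k) (cd_zero (S k))) =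
          (cd_opp (S k) (cd_imag k), cd_opp (S k) (cd_zero (S k)))).
  rewrite IHk. reflexivity.
Qed.

Lemma cd_mul_pair k a b c d :
  cd_mul (S k) (a, b) (c, d) =
  (cd_sub k (cd_mul k a c) (cd_mul k (cd_conj k d) b),
   cd_add k (cd_mul k d a) (cd_mul k b (cd_conj k c))).
Proof. reflexivity. Qed.

Lemma cd_mul_imag_imag k x :
  cd_mul (S k) (cd_mul (S k) x (cd_imag k)) (cd_imag k) = cd_opp (S k) x.
Proof.
  induction k as [|k IHk].
  - destruct x as [a b]. simpl. unfold cd_sub; simpl. f_equal; ring.
  - destruct x as [a b].
    change (cd_imag (S k)) with (cd_imag k, cd_zero (S k)).
    change (cd_opp (S (S k)) (a, b)) with (cd_opp (S k) a, cd_opp (S k) b).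
    rewrite !cd_mul_pair, cd_conj_zero, !cd_mul0l, cd_conj_imag,
      !cd_subr0, !cd_add0l, !cd_mulNr, cd_mulNl, !IHk.
    f_equal; cd_linear.
Qed.


Lemma cd_mul_imag_eq0 k x : cd_mul (S k) x (cd_imag k) = cd_zero (S k) -> x = cd_zero (S k).
Proof.
  intros H. pose proof (cd_mul_imag_imag k x) as Hx. rewrite H, cd_mul0l in Hx.
  apply cd_ext; intros i. apply (f_equal (fun v => cd_coord _ v i)) in Hx.
  rewrite cd_coord_opp, cd_coord_zero in Hx. rewrite cd_coord_zero. lra.
Qed.

Lemma spherical_root_equiv k f l c :
  spherical_root k f c -> quad_equiv k l c -> spherical_root k f l.
Proof.
  intros (Hc & _ & Hsph) Hlc. pose proof Hlc as [Hre Hnrm]%quad_equivP.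
  split; [|split].
  - rewrite cd_is_real_nrm, Hre, Hnrm, <- cd_is_real_nrm. exact Hc.
  - apply Hsph. rewrite <- (char_eval_equiv k l c l Hlc). apply char_eval_self.
  - intros r Hr. apply Hsph. rewrite <- (char_eval_equiv k l c r Hlc). exact Hr.
Qed.

Lemma spherical_root_on_class k f l r :
  spherical_root k f l -> cd_re k r = cd_re k l -> cd_nrm k r = cd_nrm k l ->
  cd_add k (cd_mul k (rem_coef1 k (2 * cd_re k l) (cd_nrm k l) 0 f) r)
           (rem_coef0 k (2 * cd_re k l) (cd_nrm k l) 0 f) = cd_zero k.
Proof.
  intros (_ & _ & Hsph) Hre Hnrm.
  rewrite <- (poly_eval_from_quad k _ _ r).
  - apply Hsph. rewrite (char_eval_equiv k l r r) by (apply quad_equivP; auto).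
    apply char_eval_self.
  - rewrite cd_sqrE, Hre, Hnrm. reflexivity.
Qed.

(* f vanishes at Re l ± rho i; the two values of A (Re l ± rho i) + B differ by 2 rho A i. *)
Lemma spherical_root_rem_eq0 k f l :
  spherical_root k f l ->
  rem_coef1 k (2 * cd_re k l) (cd_nrm k l) 0 f = cd_zero k /\
  rem_coef0 k (2 * cd_re k l) (cd_nrm k l) 0 f = cd_zero k.
Proof.
  intros Hl. destruct k as [|k].
  { exfalso. apply (proj1 Hl). exists l. reflexivity. }
  pose proof (cd_not_real_nrm _ _ (proj1 Hl)) as Hlt.
  set (c := cd_re (S k) l) in *.
  set (A := rem_coef1 (S k) (2 * c) (cd_nrm (S k) l) 0 f).
  set (B := rem_coef0 (S k) (2 * c) (cd_nrm (S k) l) 0 f).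
  set (rho := sqrt (cd_nrm (S k) l - c * c)).
  assert (Hrho : rho * rho = cd_nrm (S k) l - c * c) by (apply sqrt_sqrt; lra).
  assert (Hrho0 : 0 < rho) by (apply sqrt_lt_R0; lra).
  assert (Hvanish : forall s, s * s = rho * rho ->
    cd_add (S k) (cd_add (S k) (cd_scal (S k) c A)
                    (cd_scal (S k) s (cd_mul (S k) A (cd_imag k)))) B = cd_zero (S k)).
  { intros s Hs.
    set (r := cd_add (S k) (cd_real (S k) c) (cd_scal (S k) s (cd_imag k))).
    rewrite <- (spherical_root_on_class (S k) f l r Hl).
    - unfold r. rewrite cd_mulDr, cd_mul_real_r, cd_mulZr. reflexivity.
    - unfold r. rewrite cd_reD, cd_re_real, cd_reZ, cd_re_imag. fold c. ring.
    - unfold r. rewrite cd_nrm_add_real, cd_reZ, cd_re_imag, cd_nrmZ, cd_nrm_imag. fold c. lra. }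
  pose proof (Hvanish rho eq_refl) as Hplus.
  pose proof (Hvanish (- rho) ltac:(ring)) as Hminus.
  assert (HAi : cd_mul (S k) A (cd_imag k) = cd_zero (S k)).
  { apply cd_ext; intros i. apply (f_equal (fun v => cd_coord _ v i)) in Hplus, Hminus.
    rewrite !cd_coord_add, !cd_coord_scal, !cd_coord_zero in Hplus, Hminus. rewrite cd_coord_zero.
    apply (Rmult_eq_reg_l rho); lra. }
  assert (HA : A = cd_zero (S k)) by exact (cd_mul_imag_eq0 k A HAi).
  split; [exact HA|].
  rewrite HAi, HA in Hplus. apply cd_ext; intros i.
  apply (f_equal (fun v => cd_coord _ v i)) in Hplus.
  rewrite !cd_coord_add, !cd_coord_scal, !cd_coord_zero in Hplus. rewrite cd_coord_zero. lra.
Qed.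

(* [X^2 - 2cX + (c^2 + s^2)], whose roots are [c ± i s], divides the real polynomial [g]
   ([CD 0] is [R]). *)
Definition quad_divides (c s : R) (g : list R) : Prop :=
  rem_coef1 0 (2 * c) (c * c + s * s) 0 g = 0 /\ rem_coef0 0 (2 * c) (c * c + s * s) 0 g = 0.

Module ComplexRoots.
Import ssreflect ssrfun ssrbool eqtype ssrnat seq ssralg poly complex Rstruct ring.
Import GRing.Theory.

Lemma In_mem {T : eqType} {x : T} {s : seq T} : x \in s -> List.In x s.
Proof. by elim: s => //= a s IH; rewrite in_cons => /orP [/eqP ->|/IH]; [left|right]. Qed.

Lemma NoDup_uniq (T : eqType) (s : seq T) : List.NoDup s -> uniq s.
Proof.
elim: s => //= a s IH /List.NoDup_cons_iff [a_notin s_nodup].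
by rewrite IH // andbT; apply/negP => /In_mem.
Qed.

Lemma List_last_last (T : Type) (s : list T) x : List.last s x = last x s.
Proof. by elim: s x => //= a s IH x; case: s IH => //= b s ->. Qed.

Lemma length_size (T : Type) (s : list T) : length s = size s.
Proof. by elim: s => //= a s ->. Qed.

Section HornerQuad.
Local Open Scope ring_scope.
Local Open Scope complex_scope.

Variables (t m : R) (z : R[i]).
Hypothesis z_quad : z * z = t%:C * z - m%:C.

Lemma complex_pow_quad j : z ^+ j = (xpow_rem t m j).1%:C * z + (xpow_rem t m j).2%:C.
Proof.
elim: j => [|j IH]; first by rewrite expr0 /= rmorph0 mul0r add0r rmorph1.
rewrite exprS IH /= ?RmultE ?RplusE ?RoppE !rmorphD !rmorphM rmorphN.
transitivity ((xpow_rem t m j).1%:C * (z * z) + (xpow_rem t m j).2%:C * z); first by ring.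
by rewrite z_quad; ring.
Qed.

Lemma horner_rec_quad g j :
  horner_rec (map (real_complex R) g) z * z ^+ j =
  (rem_coef1 0 t m j g)%:C * z + (rem_coef0 0 t m j g)%:C.
Proof.
elim: g j => [|a g IH] j /=; first by rewrite mul0r rmorph0 mul0r add0r.
rewrite ?RmultE ?RplusE !rmorphD !rmorphM.
transitivity (horner_rec [seq x%:C | x <- g] z * z ^+ j.+1 + a%:C * z ^+ j).
  by rewrite exprS; ring.
by rewrite IH complex_pow_quad; ring.
Qed.

End HornerQuad.

Section RootCount.
Local Open Scope ring_scope.
Local Open Scope complex_scope.

Lemma root_quad_divides c s g :
  quad_divides c s g -> root (Poly (map (real_complex R) g)) (c +i* s).
Proof.
move=> [rem1 rem0].
have z_quad : (c +i* s) * (c +i* s) = (2 * c)%R%:C * (c +i* s) - (c * c + s * s)%R%:C.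
  by simpc; apply/eqP; rewrite eq_complex /=; apply/andP; split; apply/eqP; ring.
rewrite /root horner_Poly -[horner_rec _ _]mulr1 -(expr0 (c +i* s)).
by rewrite (horner_rec_quad _ _ _ z_quad) rem1 rem0 rmorph0 mul0r addr0.
Qed.

Lemma quad_divides_bound (g : list R) (n : nat) (L : list (R * R)) :
  length g = n.+1 -> List.last g 0 <> 0 -> List.NoDup L ->
  (forall p, List.In p L -> Rlt 0 p.2 /\ quad_divides p.1 p.2 g) ->
  (2 * length L <= n)%coq_nat.
Proof.
move=> g_size g_last L_nodup L_roots.
set P := Poly (map (real_complex R) g).
have P_size : size P = n.+1.
  have lead_neq0 : last 0 (map (real_complex R) g) != 0.
    by rewrite -(rmorph0 (real_complex R)) last_map fmorph_eq0 -List_last_last; apply/eqP.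
  by rewrite /P (PolyK lead_neq0) size_map -length_size.
have P_neq0 : P != 0 by rewrite -size_poly_eq0 P_size.
set zs := [seq p.1 +i* p.2 | p <- L] ++ [seq p.1 +i* (- p.2) | p <- L].
have zs_roots : all (root P) zs.
  rewrite all_cat !all_map; apply/andP; split; apply/allP => p /In_mem p_in /=;
    have [_ p_div] := L_roots p p_in; apply: root_quad_divides => //.
  by move: p_div; rewrite /quad_divides -RoppE Rmult_opp_opp.
have zs_uniq : uniq zs.
  have inj_pos : injective (fun p : R * R => p.1 +i* p.2) by move=> [a b] [c d] [-> ->].
  have inj_neg : injective (fun p : R * R => p.1 +i* (- p.2)).
    by move=> [a b] [c d] [-> bd]; rewrite -[b]opprK bd opprK.
  rewrite cat_uniq !map_inj_uniq // NoDup_uniq // andbT /=.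
  apply/hasPn => _ /mapP [p p_in ->]; apply/negP => /mapP [q q_in] [_ pq].
  have [p_pos _] := L_roots p (In_mem p_in); have [q_pos _] := L_roots q (In_mem q_in).
  move: p_pos q_pos pq; rewrite -RoppE; lra.
have := max_poly_roots P_neq0 zs_roots zs_uniq.
rewrite P_size /zs size_cat !size_map -length_size => /ltP; lia.
Qed.

End RootCount.
End ComplexRoots.

Lemma last_map {A B} (h : A -> B) (l : list A) d : last (map h l) (h d) = h (last l d).
Proof. induction l as [|a [|b l] IH]; simpl in *; auto. Qed.

Lemma NoDup_map_inequiv {A B} (h : A -> B) (E : A -> A -> Prop) (L : list A) :
  (forall x y, h x = h y -> E x y) ->
  ForallOrdPairs (fun x y => ~ E x y) L -> NoDup (map h L).
Proof.
  intros Hh HL. induction HL as [|x L Hx HL IH]; simpl; constructor; auto.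
  intros (y & Hyx & Hy)%in_map_iff. rewrite Forall_forall in Hx.
  apply (Hx y Hy), Hh. symmetry. exact Hyx.
Qed.

(* Otherwise an element outside the E-classes of a list could always be added, giving
   lists of every length. *)
Lemma maximal_inequiv_list {A} (P : A -> Prop) (E : A -> A -> Prop) (N : nat) :
  (forall L, Forall P L -> ForallOrdPairs (fun x y => ~ E x y) L -> (length L <= N)%nat) ->
  exists L, Forall P L /\ ForallOrdPairs (fun x y => ~ E x y) L /\ (length L <= N)%nat /\
    forall x, P x -> exists c, In c L /\ E x c.
Proof.
  intros Hbound. apply NNPP. intros Hno.
  assert (Hlong : forall m, exists L,
    Forall P L /\ ForallOrdPairs (fun x y => ~ E x y) L /\ length L = m).
  { induction m as [|m (L & HP & HE & Hlen)].
    - exists nil. repeat constructor.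
    - assert (Hx : exists x, P x /\ ~ exists c, In c L /\ E x c).
      { apply NNPP. intros Hnx. apply Hno. exists L. repeat split; auto.
        intros x Hx. apply NNPP. intros Hc. apply Hnx. exists x. auto. }
      destruct Hx as (x & Hx & Hc). exists (x :: L). repeat split.
      + constructor; assumption.
      + constructor; [|assumption]. apply Forall_forall. intros y Hy Hxy.
        apply Hc. exists y. auto.
      + simpl. congruence. }
  destruct (Hlong (S N)) as (L & HP & HE & Hlen). specialize (Hbound L HP HE). lia.
Qed.

(* [(Re l, rho)] encodes the root [Re l + i rho] of [p_l] in the complex upper half-plane. *)
Definition upper_root k (l : CD k) : R * R :=
  (cd_re k l, sqrt (cd_nrm k l - cd_re k l * cd_re k l)).

Lemma upper_root_quad_equiv k l c : upper_root k l = upper_root k c -> quad_equiv k l c.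
Proof.
  unfold upper_root. intros [= Hre Hs]. apply quad_equivP. split; [exact Hre|].
  pose proof (cd_re_sqr_le_nrm k l); pose proof (cd_re_sqr_le_nrm k c).
  apply (f_equal (fun x => x * x)) in Hs. rewrite !sqrt_sqrt in Hs by lra.
  rewrite Hre in Hs. lra.
Qed.

Lemma spherical_root_upper_pos k f l : spherical_root k f l -> 0 < snd (upper_root k l).
Proof.
  intros [Hl _]. apply sqrt_lt_R0. pose proof (cd_not_real_nrm k l Hl). lra.
Qed.

Lemma spherical_root_quad_divides k f l i :
  spherical_root k f l ->
  quad_divides (fst (upper_root k l)) (snd (upper_root k l)) (map (fun a => cd_coord k a i) f).
Proof.
  intros Hl. pose proof (cd_re_sqr_le_nrm k l).
  destruct (spherical_root_rem_eq0 k f l Hl) as [H1 H0].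
  unfold quad_divides, upper_root; simpl. rewrite sqrt_sqrt by lra.
  replace (cd_re k l * cd_re k l + (cd_nrm k l - cd_re k l * cd_re k l)) with (cd_nrm k l)
    by ring.
  rewrite <- cd_coord_rem_coef1, <- cd_coord_rem_coef0, H1, H0, cd_coord_zero. split; reflexivity.
Qed.

Lemma spherical_classes_bound k f n L :
  has_degree k f n -> Forall (spherical_root k f) L ->
  ForallOrdPairs (fun x y => ~ quad_equiv k x y) L -> (2 * length L <= n)%nat.
Proof.
  intros [Hlen Hlead] Hsph Hpairs.
  destruct (cd_neq0_coord k _ Hlead) as [i Hi].
  rewrite <- (length_map (upper_root k)).
  apply (ComplexRoots.quad_divides_bound (map (fun a => cd_coord k a i) f)).
  - rewrite length_map. exact Hlen.
  - rewrite <- (last_map (fun a => cd_coord k a i)), cd_coord_zero in Hi. exact Hi.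
  - apply (NoDup_map_inequiv _ (quad_equiv k)); [apply upper_root_quad_equiv | exact Hpairs].
  - intros p (l & <- & Hl)%in_map_iff. rewrite Forall_forall in Hsph. split.
    + apply (spherical_root_upper_pos k f), Hsph, Hl.
    + apply spherical_root_quad_divides, Hsph, Hl.
Qed.

Theorem corollary3p14 (k n : nat) (f : list (CD k)) :
  has_degree k f n ->
  exists reps : list (CD k),
    (length reps <= Nat.div n 2)%nat /\
    forall l : CD k,
      spherical_root k f l <-> exists c, In c reps /\ quad_equiv k l c.
Proof.
  intros Hdeg.
  destruct (maximal_inequiv_list (spherical_root k f) (quad_equiv k) (Nat.div n 2))
    as (reps & Hsph & Hpairs & Hlen & Hcover).
  { intros L HL Hpairs. apply Nat.div_le_lower_bound; [lia|].
    exact (spherical_classes_bound k f n L Hdeg HL Hpairs). }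
  exists reps. split; [exact Hlen|]. intros l. split; [apply Hcover|].
  intros (c & Hc & Hlc). rewrite Forall_forall in Hsph.
  exact (spherical_root_equiv k f l c (Hsph c Hc) Hlc).
Qed.
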